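(* Let $q$ be odd, and for $a\in\mathbb{F}_{q^3}$ let $\operatorname{T}(a)=a+a^q+a^{q^2}$ and $\operatorname{N}(a)=a^{1+q+q^2}$ denote the trace and norm from $\mathbb{F}_{q^3}$ to $\mathbb{F}_q$. Then for arbitrary $\beta,\gamma\in\mathbb{F}_q$ there exists $s\in\mathbb{F}_{q^3}\setminus\mathbb{F}_q$ such that $$\operatorname{T}\big(s(s+\beta)\big)+\operatorname{N}(s)=-\gamma.$$ In particular, let $\alpha\in\overline{\mathbb{F}}_q$ be a root of unity of order $q^2+q+1$, let $$f_3(X)=(X-1)^2(X-\alpha)(X-\alpha^{-1})(X-\alpha^{q})(X-\alpha^{-q})(X-\alpha^{q+1})(X-\alpha^{-q-1}),$$ and let $D$ be the $8\times8$ matrix over $\mathbb{F}_{q^3}(t,s)$ (with $t,s$ indeterminates) $$D=\begin{pmatrix}-t&-(s^{1+q+q^2}+s^{q^2}t^q+t^{q^2}s)&s^{1+q}+t^q&-t^{q^2}&-s&s^{q^2}&1&0\\-1&0&0&0&0&0&0&0\\0&-(s^{q+q^2}+t^{q^2})&s^q&0&-1&0&0&0\\0&-s^{q^2}&1&0&0&0&0&0\\0&-t^q&0&s^q&0&1&0&0\\0&-s&0&-1&0&0&0&0\\0&-t&0&0&0&0&0&-1\\0&1&0&0&0&0&0&0\end{pmatrix};$$ then there is a specialization $t\mapsto t_0$, $s\mapsto s_0$ with $t_0,s_0\in\mathbb{F}_{q^3}$ under which the characteristic polynomial of $D$ becomes $f_3$. *)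

From mathcomp Require Import all_boot all_order all_algebra all_field.
Set Implicit Arguments. Unset Strict Implicit. Unset Printing Implicit Defensive.
Import GRing.Theory.
Local Open Scope ring_scope.

(* L plays the role of F_{q^3}; F_q is the fixed field {x | x^q = x}. *)
Section Defs.
Variables (L : finFieldType) (q : nat).

Definition trq (a : L) : L := a + a ^+ q + a ^+ (q ^ 2).
Definition nrmq (a : L) : L := a ^+ (1 + q + q ^ 2).

(* the 8x8 matrix D with the indeterminates t, s specialized to t, s in L *)
Definition Dmat (t s : L) : 'M[L]_8 :=
  let rows : seq (seq L) :=
    [:: [:: - t; - (s ^+ (1 + q + q ^ 2) + s ^+ (q ^ 2) * t ^+ q + t ^+ (q ^ 2) * s);
            s ^+ (1 + q) + t ^+ q; - t ^+ (q ^ 2); - s; s ^+ (q ^ 2); 1; 0];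
        [:: -1; 0; 0; 0; 0; 0; 0; 0];
        [:: 0; - (s ^+ (q + q ^ 2) + t ^+ (q ^ 2)); s ^+ q; 0; -1; 0; 0; 0];
        [:: 0; - s ^+ (q ^ 2); 1; 0; 0; 0; 0; 0];
        [:: 0; - t ^+ q; 0; s ^+ q; 0; 1; 0; 0];
        [:: 0; - s; 0; -1; 0; 0; 0; 0];
        [:: 0; - t; 0; 0; 0; 0; 0; -1];
        [:: 0; 1; 0; 0; 0; 0; 0; 0]] in
  \matrix_(i < 8, j < 8) nth 0 (nth [::] rows i) j.

Definition f3 (alpha : L) : {poly L} :=
  ('X - 1) ^+ 2 * ('X - alpha%:P) * ('X - (alpha^-1)%:P)
  * ('X - (alpha ^+ q)%:P) * ('X - ((alpha ^+ q)^-1)%:P)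
  * ('X - (alpha ^+ (q + 1))%:P) * ('X - ((alpha ^+ (q + 1))^-1)%:P).
End Defs.

From Stdlib Require PeanoNat.
From mathcomp Require Import all_boot all_order all_algebra all_field.
From mathcomp Require Import ring.
Import GRing.Theory.
Local Open Scope ring_scope.
Set Implicit Arguments. Unset Strict Implicit.

(** Given beta, gamma in F_q, it suffices to find a cubic X^3 - a X^2 + b X - c over F_q
    with no root in F_q such that a^2 - 2b + beta a + c = -gamma: its roots in F_{q^3} are
    the conjugates s, s^q, s^(q^2) of some s outside F_q, and then
    T(s(s + beta)) + N(s) = (a^2 - 2b) + beta a + c.  Counting produces such a cubic: once a is
    chosen with the cubic nonzero at 2, a root x in F_q \ {2} would force b = psi(x) for an
    explicit psi, and psi takes at most q - 1 values on F_q.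

    The characteristic polynomial of D is a palindromic octic whose coefficients are polynomials
    in s, t and their conjugates.  For t = s^q + e with e in F_q they only depend on e and
    T(s(s + e)) + N(s), and f_3 is the palindromic octic determined by the Frobenius-invariant
    sums alpha + alpha^q + alpha^(-q-1) and alpha^-1 + alpha^-q + alpha^(q+1); the first part
    then supplies s. *)

Section FrobeniusPower.
Variables (F : fieldType) (q : nat).
Hypothesis qF : [pchar F].-nat q.

Lemma exprDq (x y : F) : (x + y) ^+ q = x ^+ q + y ^+ q.
Proof. exact: exprDn_pchar. Qed.

Lemma exprBq (x y : F) : (x - y) ^+ q = x ^+ q - y ^+ q.
Proof. by rewrite exprDq exprNn_pchar. Qed.

Lemma natr_exprq n : (n%:R : F) ^+ q = n%:R.
Proof.
have q_gt0 : (0 < q)%N by case/andP: qF.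
by elim: n => [|n IH]; rewrite ?expr0n ?gtn_eqF // -addn1 natrD exprDq IH expr1n.
Qed.

Lemma exprq_inj : injective (fun x : F => x ^+ q).
Proof.
move=> x y /= /eqP; rewrite -subr_eq0 -exprBq expf_eq0 subr_eq0 => /andP[_ /eqP //].
Qed.

End FrobeniusPower.

Section Cubic.
Variable F : fieldType.

Definition cubic (a b c x : F) := x ^+ 3 - a * x ^+ 2 + b * x - c.

Lemma cubic_root_pair (a b c x y : F) : x != y -> cubic a b c x = 0 -> cubic a b c y = 0 ->
  x ^+ 2 + x * y + y ^+ 2 - a * (x + y) + b = 0.
Proof.
move=> xy hx hy.
have : (x - y) * (x ^+ 2 + x * y + y ^+ 2 - a * (x + y) + b) = 0.
  by rewrite -[0](subrr 0) -{1}hx -hy /cubic; ring.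
by move/eqP; rewrite mulf_eq0 subr_eq0 (negbTE xy) => /eqP.
Qed.

Lemma cubic_third_root (a b c x y : F) : x != y -> cubic a b c x = 0 -> cubic a b c y = 0 ->
  cubic a b c (a - x - y) = 0.
Proof.
move=> xy hx hy; have hxy := cubic_root_pair xy hx hy.
have -> : cubic a b c (a - x - y) =
    cubic a b c x + (a - 2 * x - y) * (x ^+ 2 + x * y + y ^+ 2 - a * (x + y) + b).
  by rewrite /cubic; ring.
by rewrite hx hxy mulr0 addr0.
Qed.

Lemma cubic_vieta (a b c x y z : F) : x != y -> x != z -> y != z ->
  cubic a b c x = 0 -> cubic a b c y = 0 -> cubic a b c z = 0 ->
  [/\ a = x + y + z, b = x * y + x * z + y * z & c = x * y * z].
Proof.
move=> xy xz yz hx hy hz.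
have hxy := cubic_root_pair xy hx hy; have hxz := cubic_root_pair xz hx hz.
have ha : a = x + y + z.
  have : (y - z) * (x + y + z - a) = 0 by rewrite -[0](subrr 0) -{1}hxy -hxz; ring.
  by move/eqP; rewrite mulf_eq0 !subr_eq0 (negbTE yz) => /eqP.
have hb : b = x * y + x * z + y * z.
  by rewrite -[LHS]subr0 -hxy ha; ring.
by split=> //; rewrite -[LHS]addr0 -hx /cubic ha hb; ring.
Qed.

End Cubic.

Section CubicFrobenius.
Variables (F : fieldType) (q : nat).
Hypothesis qF : [pchar F].-nat q.
Variables a b c : F.
Hypotheses (aq : a ^+ q = a) (bq : b ^+ q = b) (cq : c ^+ q = c).

Lemma cubic_exprq x : cubic a b c x ^+ q = cubic a b c (x ^+ q).
Proof. by rewrite /cubic !(exprBq qF, exprDq qF) !exprMn aq bq cq; ring. Qed.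

Lemma cubic_root_exprq x : cubic a b c x = 0 -> cubic a b c (x ^+ q) = 0.
Proof. by move=> hx; rewrite -cubic_exprq hx expr0n gtn_eqF //; case/andP: qF. Qed.

Lemma cubic_root_conjugates r :
  (forall x, x ^+ q = x -> cubic a b c x != 0) -> cubic a b c r = 0 ->
  [/\ r != r ^+ q, r != (r ^+ q) ^+ q, r ^+ q != (r ^+ q) ^+ q
    & ((r ^+ q) ^+ q) ^+ q = r].
Proof.
move=> no_fixed_root hr; set r1 := r ^+ q; set r2 := r1 ^+ q.
have hr1 : cubic a b c r1 = 0 by apply: cubic_root_exprq.
have hr2 : cubic a b c r2 = 0 by apply: cubic_root_exprq.
have n1 : r != r1 by apply/eqP => /esym/no_fixed_root; rewrite hr eqxx.
have n12 : r1 != r2 by apply/eqP => /esym/no_fixed_root; rewrite hr1 eqxx.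
have n2 : r != r2.
  apply/eqP => /esym e2; have /no_fixed_root : (a - r - r1) ^+ q = a - r - r1.
    by rewrite !(exprBq qF) aq -/r2 e2 addrAC.
  by rewrite (cubic_third_root n1 hr hr1) eqxx.
split=> //.
have [ea eb ec] := cubic_vieta n1 n2 n12 hr hr1 hr2.
have : (r2 ^+ q - r) * (r2 ^+ q - r1) * (r2 ^+ q - r2) = 0.
  by rewrite -(cubic_root_exprq hr2) /cubic ea eb ec; ring.
move/eqP; rewrite !mulf_eq0 !subr_eq0 => /orP[/orP[/eqP // | /eqP/(exprq_inj qF) e] | ].
  by rewrite e eqxx in n2.
by move/eqP/(exprq_inj qF) => e; rewrite e eqxx in n12.
Qed.
End CubicFrobenius.

Lemma fmorph_expf_card (L : finFieldType) (K : fieldType) (f : {rmorphism L -> K}) (y : K) :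
  y ^+ #|L| = y -> exists x, f x = y.
Proof.
move=> hy; have : root (map_poly f ('X^#|L| - 'X)) y.
  by rewrite rmorphB /= map_polyXn map_polyX rootE !hornerE hy subrr.
rewrite finField_genPoly rmorph_prod rootE horner_prod.
by case/prodf_eq0 => x _ /=; rewrite map_polyXsubC !hornerE subr_eq0 => /eqP ->; exists x.
Qed.

Lemma finField_cubic_root (L : finFieldType) (q : nat) (qL : [pchar L].-nat q)
    (hL : #|L| = (q ^ 3)%N) (a b c : L) :
  a ^+ q = a -> b ^+ q = b -> c ^+ q = c -> (forall x, x ^+ q = x -> cubic a b c x != 0) ->
  exists s, cubic a b c s = 0.
Proof.
move=> aq bq cq no_fixed_root.
(* A root r in an algebraic closure satisfies r^(q^3) = r, hence comes from L. *)
have [K [f _]] := countable_algebraic_closure L.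
have qK : [pchar K].-nat q by rewrite (eq_pnat _ (fmorph_pchar f)).
have cubic_f x : f (cubic a b c x) = cubic (f a) (f b) (f c) (f x).
  by rewrite /cubic !(rmorphB, rmorphD, rmorphM, rmorphXn).
have fixed_f x : x ^+ q = x -> f x ^+ q = f x by rewrite -rmorphXn => ->.
have expq3 (y : K) : ((y ^+ q) ^+ q) ^+ q = y -> y ^+ #|L| = y.
  by rewrite hL -!exprM !expnS expn0 muln1.
have no_fixed_root_f y : y ^+ q = y -> cubic (f a) (f b) (f c) y != 0.
  move=> yq; have [x fx] : exists x, f x = y by apply/fmorph_expf_card/expq3; rewrite !yq.
  by rewrite -fx -cubic_f fmorph_eq0 no_fixed_root //; apply: (fmorph_inj f); rewrite rmorphXn fx.
have [r hr] : exists r, cubic (f a) (f b) (f c) r = 0.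
  have [r hr] := @solve_monicpoly K 3 (nth 0 [:: f c; - f b; f a]) isT.
  exists r; move: hr; rewrite !big_ord_recr big_ord0 /= /cubic => ->; ring.
have [_ _ _ r3] := cubic_root_conjugates qK (fixed_f _ aq) (fixed_f _ bq) (fixed_f _ cq) no_fixed_root_f hr.
have [s hs] := fmorph_expf_card f (expq3 r r3).
by exists s; apply: (fmorph_inj f); rewrite cubic_f hs hr rmorph0.
Qed.

Lemma finField_cubic_conjugates (L : finFieldType) (q : nat) (qL : [pchar L].-nat q)
    (hL : #|L| = (q ^ 3)%N) (a b c : L) :
  a ^+ q = a -> b ^+ q = b -> c ^+ q = c -> (forall x, x ^+ q = x -> cubic a b c x != 0) ->
  exists s : L, [/\ s ^+ q != s, a = s + s ^+ q + (s ^+ q) ^+ q,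
    b = s * s ^+ q + s * (s ^+ q) ^+ q + s ^+ q * (s ^+ q) ^+ q
    & c = s * s ^+ q * (s ^+ q) ^+ q].
Proof.
move=> aq bq cq no_fixed_root; have [s hs] := finField_cubic_root qL hL aq bq cq no_fixed_root.
have hs1 := cubic_root_exprq qL aq bq cq hs; have hs2 := cubic_root_exprq qL aq bq cq hs1.
have [n1 n2 n12 _] := cubic_root_conjugates qL aq bq cq no_fixed_root hs.
by exists s; rewrite eq_sym; split=> //; have [] := cubic_vieta n1 n2 n12 hs hs1 hs2.
Qed.

Lemma fixed_cubic_without_fixed_root (L : finFieldType) (q : nat) (qL : [pchar L].-nat q)
    (two_neq0 : 2 != 0 :> L) (beta gamma : L) :
  beta ^+ q = beta -> gamma ^+ q = gamma ->
  exists a b c : L, [/\ a ^+ q = a, b ^+ q = b, c ^+ q = c,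
    a ^+ 2 - 2 * b + beta * a + c = - gamma
    & forall x, x ^+ q = x -> cubic a b c x != 0].
Proof.
move=> betaq gammaq.
(* [h a] is the value at 2 of every cubic of the family considered below. *)
pose h (a : L) := a ^+ 2 + (beta - 4) * a + 8 + gamma.
have [a aq ha] : exists2 a : L, a ^+ q = a & h a != 0.
  (* This is where q odd is used. *)
  have h_diff : h 0 - 2 * h 1 + h 2 = 2 by rewrite /h; ring.
  have [h0|] := eqVneq (h 0) 0; last by exists 0; rewrite ?(natr_exprq qL 0).
  have [h1|] := eqVneq (h 1) 0; last by exists 1; rewrite ?expr1n.
  have [h2|] := eqVneq (h 2) 0; last by exists 2; rewrite ?natr_exprq.
  by move: two_neq0; rewrite -h_diff h0 h1 h2 mulr0 subrr addr0 eqxx.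
pose K := [set x : L | x ^+ q == x].
pose psi (x : L) := - (x ^+ 3 - a * x ^+ 2 + a ^+ 2 + beta * a + gamma) / (x - 2).
have [b Kb psi_b] : exists2 b, b \in K & b \notin psi @: (K :\ 2).
  apply/subsetPn; apply: contraTN isT => /subset_leq_card.
  rewrite leqNgt (leq_ltn_trans (leq_imset_card _ _)) //.
  have K2 : 2 \in K by rewrite inE natr_exprq.
  by rewrite [#|K|](cardsD1 2) K2.
move: Kb; rewrite inE => /eqP bq.
exists a, b, (2 * b - a ^+ 2 - beta * a - gamma); split=> //.
- by rewrite !(exprBq qL) !exprMn (natr_exprq qL) aq bq betaq gammaq expr2.
- by ring.
move=> x xq; apply/eqP => root_x.
have [x2|x_neq2] := eqVneq x 2.
  by move: ha; rewrite -root_x x2 /cubic /h; apply/negP; rewrite negbK; apply/eqP; ring.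
have x2 : x - 2 != 0 by rewrite subr_eq0.
apply: (negP psi_b); apply/imsetP; exists x; first by rewrite !inE x_neq2 xq eqxx.
by apply: (mulIf x2); rewrite divfK // -[LHS]subr0 -root_x /cubic; ring.
Qed.

Lemma exists_trace_norm_solution (L : finFieldType) (q : nat) (qL : [pchar L].-nat q)
    (hL : #|L| = (q ^ 3)%N) (two_neq0 : 2 != 0 :> L) (beta gamma : L) :
  beta ^+ q = beta -> gamma ^+ q = gamma ->
  exists s : L, s ^+ q != s /\ trq q (s * (s + beta)) + nrmq q s = - gamma.
Proof.
move=> betaq gammaq.
have [a [b [c [aq bq cq <- no_fixed_root]]]] := fixed_cubic_without_fixed_root qL two_neq0 betaq gammaq.
have [s [sq -> -> ->]] := finField_cubic_conjugates qL hL aq bq cq no_fixed_root.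
exists s; split=> //.
rewrite /trq /nrmq -mulnn !exprD expr1 !exprM !exprMn !(exprDq qL) !betaq.
ring.
Qed.

Lemma ltbE k j : Nat.ltb k j = (k < j)%N.
Proof. by apply/idP/idP => [/PeanoNat.Nat.ltb_lt/ltP | /ltP/PeanoNat.Nat.ltb_lt]. Qed.

Section SparseDeterminant.
Variable R : comNzRingType.

(* Laplace expansion along the first row, skipping the entries marked [None] (structural zeros).
   [Nat.ltb] is used instead of [<] because it reduces under [simpl], so [laplace_det] of a
   concrete pattern unfolds to a closed ring expression. *)
Fixpoint laplace_det (n : nat) (g : nat -> nat -> option R) : R :=
  if n is n'.+1 then
    foldr +%R 0 (map (fun j => if g 0%N j is Some a then
        (-1) ^+ j * a * laplace_det n' (fun i k => g i.+1 (if Nat.ltb k j then k else k.+1))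
      else 0) (iota 0 n))
  else 1.

Definition sparse_mx n (g : nat -> nat -> option R) : 'M[R]_n :=
  \matrix_(i, j) odflt 0 (g i j).

Lemma det_sparse_mx n g : \det (sparse_mx n g) = laplace_det n g.
Proof.
elim: n g => [|n IH] g; first by rewrite det_mx00.
rewrite (expand_det_row _ ord0); cbn [laplace_det].
rewrite foldrE big_map -/(index_iota 0 n.+1) big_mkord.
apply: eq_bigr => j _; rewrite mxE /cofactor.
have -> : row' ord0 (col' j (sparse_mx n.+1 g)) =
    sparse_mx n (fun i k => g i.+1 (if Nat.ltb k j then k else k.+1)).
  apply/matrixP => i k; rewrite !mxE /= /bump ltbE; by case: ltnP.
rewrite IH; case: (g 0%N j) => [a|] /=; last by rewrite mul0r.
by rewrite add0n mulrCA mulrA.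
Qed.

End SparseDeterminant.

Section SparseCharPoly.
Variable R : comNzRingType.

Definition char_entry (g : nat -> nat -> option R) (i j : nat) : option {poly R} :=
  if i == j then Some ('X - (odflt 0 (g i j))%:P) else omap (fun a => - a%:P) (g i j).

Lemma char_poly_sparse_mx n (g : nat -> nat -> option R) :
  char_poly (sparse_mx n g) = laplace_det n (char_entry g).
Proof.
rewrite -det_sparse_mx /char_poly; congr (\det _); apply/matrixP => i j.
rewrite !mxE /char_entry; case: eqVneq => [-> | ij]; first by rewrite eqxx mulr1n.
have /negbTE -> : (i : nat) != j by [].
by case: (g i j) => [a|] /=; rewrite ?sub0r ?oppr0.
Qed.
End SparseCharPoly.

Definition palindromic_octic (R : comNzRingType) (a b c d : R) : {poly R} :=
  'X^8 + a%:P * 'X^7 + b%:P * 'X^6 + c%:P * 'X^5 + d%:P * 'X^4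
  + c%:P * 'X^3 + b%:P * 'X^2 + a%:P * 'X + 1.

Section DPattern.
Variable R : comNzRingType.

Definition D_pattern (s0 s1 s2 t0 t1 t2 : R) (i j : nat) : option R :=
  match i, j with
  | 0, 0 => Some (- t0)
  | 0, 1 => Some (- (s0 * s1 * s2 + s2 * t1 + t2 * s0))
  | 0, 2 => Some (s0 * s1 + t1)
  | 0, 3 => Some (- t2)
  | 0, 4 => Some (- s0)
  | 0, 5 => Some s2
  | 0, 6 => Some 1
  | 1, 0 => Some (-1)
  | 2, 1 => Some (- (s1 * s2 + t2))
  | 2, 2 => Some s1
  | 2, 4 => Some (-1)
  | 3, 1 => Some (- s2)
  | 3, 2 => Some 1
  | 4, 1 => Some (- t1)
  | 4, 3 => Some s1
  | 4, 5 => Some 1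
  | 5, 1 => Some (- s0)
  | 5, 3 => Some (-1)
  | 6, 1 => Some (- t0)
  | 6, 7 => Some (-1)
  | 7, 1 => Some 1
  | _, _ => None
  end.

Lemma char_poly_D_pattern s0 s1 s2 t0 t1 t2 :
  char_poly (sparse_mx 8 (D_pattern s0 s1 s2 t0 t1 t2)) =
  palindromic_octic (t0 - s1) (- (s1 * t0 + s0 * s1 * s2 + s2 * t1 + s0 * t2))
    (s1 - t1 * t2 + s2 * t2 + s0 * t1 - s0 * s2 - t0)
    (2 * s1 * t0 + t1 ^+ 2 + t2 ^+ 2 + 2 * (s0 * s1 * s2) + s0 ^+ 2 + s2 ^+ 2 - 2).
Proof.
rewrite char_poly_sparse_mx /= /palindromic_octic.
rewrite !(polyCD, polyCN, polyCM, polyCB, polyC1, polyC0) ?rmorphXn ?rmorph_nat /=.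
ring.
Qed.
End DPattern.

Lemma Dmat_sparse (L : finFieldType) (q : nat) (t s : L) :
  Dmat q t s = sparse_mx 8 (D_pattern s (s ^+ q) (s ^+ (q ^ 2)) t (t ^+ q) (t ^+ (q ^ 2))).
Proof.
apply/matrixP => -[i Hi] [j Hj]; rewrite !mxE /=.
by do 8?[case: i Hi => [|i] Hi]; do 8?[case: j Hj => [|j] Hj] => //=; rewrite ?exprD ?expr1.
Qed.

Lemma char_poly_Dmat_shift (L : finFieldType) (q : nat) (qL : [pchar L].-nat q)
    (hL : #|L| = (q ^ 3)%N) (e s B : L) :
  e ^+ q = e -> trq q (s * (s + e)) + nrmq q s = - B ->
  char_poly (Dmat q (s ^+ q + e) s) =
    palindromic_octic e B (- e ^+ 2 - e) (2 * e ^+ 2 - 2 * B - 2).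
Proof.
move=> e_fixed hB.
have expq2 (x : L) : x ^+ (q ^ 2) = (x ^+ q) ^+ q by rewrite -exprM mulnn.
have s3 : ((s ^+ q) ^+ q) ^+ q = s.
  by rewrite -!exprM (_ : q * (q * q) = #|L|)%N ?expf_card // hL !expnS expn0 muln1.
rewrite /trq /nrmq !exprD expr1 !expq2 !exprMn !(exprDq qL) !e_fixed in hB.
rewrite Dmat_sparse char_poly_D_pattern !expq2 !(exprDq qL) !e_fixed s3 -[B]opprK -hB.
by congr palindromic_octic; ring.
Qed.

Lemma cubic_XsubC (F : fieldType) (x y z : F) : ('X - x%:P) * ('X - y%:P) * ('X - z%:P) =
  'X^3 - (x + y + z)%:P * 'X^2 + (x * y + x * z + y * z)%:P * 'X - (x * y * z)%:P.
Proof. by rewrite !(polyCD, polyCM); ring. Qed.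

Lemma f3_palindromic (F : fieldType) (a b : F) : a != 0 -> b != 0 ->
  let s1 := a + b + (a * b)^-1 in let s2 := a^-1 + b^-1 + a * b in
  ('X - 1) ^+ 2 * ('X - a%:P) * ('X - (a^-1)%:P) * ('X - b%:P) * ('X - (b^-1)%:P)
  * ('X - (a * b)%:P) * ('X - ((a * b)^-1)%:P) =
  palindromic_octic (- (s1 + s2) - 2) (3 * (s1 + s2) + s1 * s2 + 1)
    (- ((s1 + s2) ^+ 2 + 3 * (s1 + s2) + 2))
    (2 * (s1 + s2) ^+ 2 + 2 * (s1 + s2) + 4 - 2 * (s1 * s2)).
Proof.
move=> a0 b0 s1 s2; have ab0 : a * b != 0 by rewrite mulf_neq0.
have -> : ('X - 1) ^+ 2 * ('X - a%:P) * ('X - (a^-1)%:P) * ('X - b%:P) * ('X - (b^-1)%:P)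
  * ('X - (a * b)%:P) * ('X - ((a * b)^-1)%:P) =
  ('X - 1) ^+ 2 * ((('X - a%:P) * ('X - b%:P) * ('X - ((a * b)^-1)%:P)) *
    (('X - (a^-1)%:P) * ('X - (b^-1)%:P) * ('X - (a * b)%:P))) by ring.
rewrite !cubic_XsubC mulfV // -/s1.
have -> : a^-1 * b^-1 * (a * b) = 1 by field; rewrite a0 b0.
have -> : a * b + a * (a * b)^-1 + b * (a * b)^-1 = s2 by rewrite /s2; field; rewrite a0 b0.
have -> : a^-1 * b^-1 + a^-1 * (a * b) + b^-1 * (a * b) = s1 by rewrite /s1; field; rewrite a0 b0.
rewrite /palindromic_octic !(polyCD, polyCN, polyCM, polyCB, polyC1) ?rmorphXn ?rmorph_nat.
ring.
Qed.

Lemma f3_palindromic_fixed (F : finFieldType) (q : nat) (qF : [pchar F].-nat q) (alpha : F) :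
  alpha ^+ (q ^ 2 + q + 1) = 1 ->
  exists e6 e7 : F, [/\ e6 ^+ q = e6, e7 ^+ q = e7
    & f3 q alpha = palindromic_octic e7 e6 (- e7 ^+ 2 - e7) (2 * e7 ^+ 2 - 2 * e6 - 2)].
Proof.
move=> alpha_order; set b := alpha ^+ q.
have alpha0 : alpha != 0.
  by apply: contra_eq_neq alpha_order => ->; rewrite expr0n addn1 eq_sym oner_neq0.
have b0 : b != 0 by rewrite expf_neq0.
have bq : b ^+ q = (alpha * b)^-1.
  apply: (mulIf (mulf_neq0 alpha0 b0)); rewrite mulVf ?mulf_neq0 // -alpha_order.
  by rewrite /b -exprM -exprS -exprD mulnn addn1 addnS.
set s1 := alpha + b + (alpha * b)^-1; set s2 := alpha^-1 + b^-1 + alpha * b.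
have s1q : s1 ^+ q = s1.
  by rewrite /s1 !(exprDq qF) exprVn exprMn -/b bq; field; rewrite b0 alpha0 oner_neq0.
have s2q : s2 ^+ q = s2.
  by rewrite /s2 !(exprDq qF) !exprVn exprMn -/b bq; field; rewrite b0 alpha0 oner_neq0.
have f3E : f3 q alpha = palindromic_octic (- (s1 + s2) - 2) (3 * (s1 + s2) + s1 * s2 + 1)
    (- ((s1 + s2) ^+ 2 + 3 * (s1 + s2) + 2))
    (2 * (s1 + s2) ^+ 2 + 2 * (s1 + s2) + 4 - 2 * (s1 * s2)).
  by rewrite /f3 addn1 [alpha ^+ q.+1]exprS -/b f3_palindromic.
clearbody s1 s2; exists (3 * (s1 + s2) + s1 * s2 + 1), (- (s1 + s2) - 2); split.
- by rewrite !(exprDq qF, exprMn) s1q s2q !expr1n.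
- by rewrite (exprBq qF) exprNn_pchar // (exprDq qF) s1q s2q (natr_exprq qF).
by rewrite f3E; congr palindromic_octic; ring.
Qed.

Lemma pchar_pnat_of_card (L : finFieldType) (q n : nat) :
  #|L| = (q ^ n.+1)%N -> [pchar L].-nat q.
Proof.
have [p p_pr pL] := finPcharP L; rewrite (eq_pnat _ (pcharf_eq pL)) => hL.
have : p.-nat #|L| by rewrite [#|L|](card_pprimeChar pL) pnatX pnat_id.
by rewrite hL pnatX orbF.
Qed.

Lemma finField_odd_two_neq0 (L : finFieldType) : odd #|L| -> 2 != 0 :> L.
Proof.
move=> oddL; apply/negP => two0.
have pL2 : 2 \in [pchar L] by rewrite inE /= two0.
move: oddL (finNzRing_gt1 L); rewrite [#|L|](card_pprimeChar pL2).
by case: logn => [|k]; rewrite ?oddX.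
Qed.

Theorem mainTheorem14 (L : finFieldType) (q : nat)
  (hq : odd q) (hL : #|L| = (q ^ 3)%N) :
  (forall beta gamma : L, beta ^+ q = beta -> gamma ^+ q = gamma ->
     exists s : L, s ^+ q != s /\
       trq q (s * (s + beta)) + nrmq q s = - gamma)
  /\
  (forall alpha : L, (q ^ 2 + q + 1)%N.-primitive_root alpha ->
     exists t0 s0 : L, char_poly (Dmat q t0 s0) = f3 q alpha).
Proof.
have qL : [pchar L].-nat q := pchar_pnat_of_card hL.
have two_neq0 : 2 != 0 :> L by apply: finField_odd_two_neq0; rewrite hL oddX.
split=> [beta gamma | alpha /prim_expr_order alpha_order].
  exact: exists_trace_norm_solution.
have [e6 [e7 [e6q e7q ->]]] := f3_palindromic_fixed qL alpha_order.
have [s [_ hs]] := exists_trace_norm_solution qL hL two_neq0 e7q e6q.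
by exists (s ^+ q + e7), s; rewrite (char_poly_Dmat_shift qL hL e7q hs).
Qed.
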